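(* Let $R$ be a finite set of terminal pairs in $\mathbb{R}^2$ such that every pair $(l,r)\in R$ satisfies $x(l)<0\le x(r)$, let $N_{\mathrm{opt}}$ be an optimum solution of 2D-GMMN for $R$, and let $N^{+}_{\mathrm{hor}}$ be the set of horizontal segments of the right part of $N_{\mathrm{opt}}$. Let $(P_x)_{x\ge0}$ be the piercings produced by the sweep described in the context. Then for every $x\ge 0$, $$|P_x|\le 2\cdot\Big|\ell_x\cap \bigcup N^{+}_{\mathrm{hor}}\Big|.$$
   Context: A rectilinear network is a finite union of axis-parallel segments; an M-path between $p,q$ is a path of axis-parallel segments of total length $\|p-q\|_1$. An optimum solution of 2D-GMMN for a set $R$ of unordered point pairs is a minimum-length rectilinear network containing an M-path between the two points of every pair. Each pair is identified with its bounding box (smallest axis-parallel rectangle containing both points). The right part of a geometric object is its intersection with the closed half-plane $\{x\ge 0\}$; the right part of a set of objects is the set of right parts; $R^+$ denotes the right part of (the bounding boxes of) $R$. For $x\ge0$, $\ell_x$ is the vertical line at abscissa $x$, and $\mathcal{I}_x$ is the set of (nonempty) intervals $\ell_x\cap r$, $r\in R^+$. A piercing of $\mathcal{I}_x$ is a finite set of points on $\ell_x$ such that every interval of $\mathcal{I}_x$ contains one of them; it is minimal if no proper subset is a piercing. The sweep: event points are the $x$-coordinates of the right edges of the rectangles in $R^+$. $P_0$ is an arbitrary minimal piercing of $\mathcal{I}_0$. For consecutive event points $x'<x''$ and $x'<x\le x''$, $P_x$ is obtained from (the horizontal translate to $\ell_x$ of) $P_{x'}$ by iteratively removing points as long as the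 remaining set still pierces $\mathcal{I}_x$, stopping when it is a minimal piercing of $\mathcal{I}_x$ (the same set of $y$-coordinates is used for all $x\in(x',x'']$). After the last event point, $\mathcal{I}_x=\emptyset$ and $P_x=\emptyset$. *)

From Stdlib Require Import Reals Lra Lia List.
Import ListNotations.
Open Scope R_scope.

Definition point : Type := (R * R)%type.
Definition px (p : point) : R := fst p.
Definition py (p : point) : R := snd p.
Definition l1 (p q : point) : R := Rabs (px p - px q) + Rabs (py p - py q).

Definition segment : Type := (point * point)%type.
Definition axis_parallel (s : segment) : Prop :=
  px (fst s) = px (snd s) \/ py (fst s) = py (snd s).
Definition horizontal (s : segment) : Prop :=
  py (fst s) = py (snd s) /\ px (fst s) <> px (snd s).
(** Point [p] lies on the axis-parallel segment [s] (its bounding box). *)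
Definition on_seg (p : point) (s : segment) : Prop :=
  Rmin (px (fst s)) (px (snd s)) <= px p <= Rmax (px (fst s)) (px (snd s)) /\
  Rmin (py (fst s)) (py (snd s)) <= py p <= Rmax (py (fst s)) (py (snd s)).
Definition seg_length (s : segment) : R := l1 (fst s) (snd s).

Definition network : Type := list segment.
Definition rectilinear (N : network) : Prop := forall s, In s N -> axis_parallel s.
Definition in_net (N : network) (p : point) : Prop := exists s, In s N /\ on_seg p s.
Definition net_length (N : network) : R := fold_right (fun s acc => seg_length s + acc) 0 N.

Fixpoint path_in (N : network) (a : point) (vs : list point) : Prop :=
  match vs with
  | [] => True
  | b :: vs' => axis_parallel (a, b) /\ (forall p, on_seg p (a, b) -> in_net N p)
                /\ path_in N b vs'
  end.
Fixpoint path_len (a : point) (vs : list point) : R :=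
  match vs with
  | [] => 0
  | b :: vs' => l1 a b + path_len b vs'
  end.
Definition M_path (N : network) (p q : point) : Prop :=
  exists vs : list point,
    path_in N p vs /\ last vs p = q /\ path_len p vs = l1 p q.

Definition pairs : Type := list (point * point).
Definition feasible (Rp : pairs) (N : network) : Prop :=
  rectilinear N /\ forall pr, In pr Rp -> M_path N (fst pr) (snd pr).
Definition optimal (Rp : pairs) (N : network) : Prop :=
  feasible Rp N /\ forall N', feasible Rp N' -> net_length N <= net_length N'.

Definition crossing (Rp : pairs) : Prop :=
  forall pr, In pr Rp -> px (fst pr) < 0 <= px (snd pr).

(** For x >= 0, the interval l_x ∩ (right part of the bounding box of pr)
    is nonempty iff x <= x(r), and is then [ymin, ymax]. *)
Definition in_Ix (pr : point * point) (x : R) : Prop := 0 <= x <= px (snd pr).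
Definition ylo (pr : point * point) : R := Rmin (py (fst pr)) (py (snd pr)).
Definition yhi (pr : point * point) : R := Rmax (py (fst pr)) (py (snd pr)).

(** Finite point sets on l_x are represented by duplicate-free lists of
    y-coordinates. *)
Definition pierces (Rp : pairs) (x : R) (P : list R) : Prop :=
  forall pr, In pr Rp -> in_Ix pr x -> exists y, In y P /\ ylo pr <= y <= yhi pr.
Definition minimal_piercing (Rp : pairs) (x : R) (P : list R) : Prop :=
  NoDup P /\ pierces Rp x P /\
  (forall Q : list R, incl Q P -> ~ incl P Q -> ~ pierces Rp x Q).

Inductive removal_reach (Rp : pairs) (x : R) (P : list R) : list R -> Prop :=
  | rr_refl : removal_reach Rp x P P
  | rr_step : forall Q q, removal_reach Rp x P Q -> In q Q ->
      pierces Rp x (remove Req_EM_T q Q) ->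
      removal_reach Rp x P (remove Req_EM_T q Q).

(** Event points: x-coordinates of the right edges of the rectangles of R^+;
    the sweep starts at 0. *)
Definition event (Rp : pairs) (e : R) : Prop := exists pr, In pr Rp /\ e = px (snd pr).
Definition sweep_point (Rp : pairs) (e : R) : Prop := e = 0 \/ event Rp e.

Definition sweep_run (Rp : pairs) (P : R -> list R) : Prop :=
  minimal_piercing Rp 0 (P 0) /\
  (forall x' x'', sweep_point Rp x' -> sweep_point Rp x'' -> x' < x'' ->
     (forall e, sweep_point Rp e -> ~ (x' < e < x'')) ->
     forall x, x' < x <= x'' ->
       P x = P x'' /\ removal_reach Rp x (P x') (P x) /\ minimal_piercing Rp x (P x)) /\
  (forall x, 0 <= x -> (forall e, event Rp e -> e < x) -> P x = []).

(** Points of l_x ∩ ⋃ N^+_hor: points with abscissa >= 0 on a horizontal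
    segment of N (the right part of a horizontal segment). *)
Definition right_hor_point (N : network) (p : point) : Prop :=
  0 <= px p /\ exists s, In s N /\ horizontal s /\ on_seg p s.

(* Whenever P_x is nonempty it is a minimal piercing of I_x, so every p in P_x has a
   private interval of I_x: one containing p and no other point of P_x.  The M-path of the
   corresponding pair crosses l_x, and the last edge reaching l_x from the left is horizontal,
   so the private interval also contains a point h of l_x on a horizontal segment of N_opt.
   Three points of P_x cannot share such an h: the interval through h of the outer point lying
   beyond the middle point, as seen from h, would contain the middle point.
   Hence |P_x| <= 2 |l_x ∩ N^+_hor|. *)

From Stdlib Require Import Reals List Lra Lia Classical ClassicalEpsilon.
Import ListNotations.
Open Scope R_scope.

Lemma length_le_mul_witnesses {A B : Type} (W : A -> B -> Prop) (k : nat) :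
  forall (L : list B) (P : list A), NoDup P ->
  (forall p, In p P -> exists h, In h L /\ W p h) ->
  (forall h Q, NoDup Q -> incl Q P -> (forall q, In q Q -> W q h) -> (length Q <= k)%nat) ->
  (length P <= k * length L)%nat.
Proof.
  induction L as [|h L IH]; intros P HP Hwit Hfib.
  - destruct P as [|p P]; [simpl; lia|].
    destruct (Hwit p (or_introl eq_refl)) as [h [[] _]].
  - set (f := fun p => if excluded_middle_informative (W p h) then true else false).
    rewrite <- (filter_length f P).
    assert (Hfh : (length (filter f P) <= k)%nat).
    { apply (Hfib h); [now apply NoDup_filter|..].
      - intros q Hq; now apply filter_In in Hq.
      - intros q Hq; apply filter_In in Hq as [_ Hq]; unfold f in Hq.
        now destruct (excluded_middle_informative (W q h)). }
    assert (Hrest : (length (filter (fun p => negb (f p)) P) <= k * length L)%nat).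
    { apply IH; [now apply NoDup_filter|..].
      - intros p Hp; apply filter_In in Hp as [Hp Hnf]; unfold f in Hnf.
        destruct (excluded_middle_informative (W p h)) as [|Hn]; [discriminate|].
        destruct (Hwit p Hp) as [h' [[<-|Hh'] Hw]]; [contradiction|eauto].
      - intros h' Q HQ HQP HW; apply (Hfib h' Q HQ); [|exact HW].
        intros q Hq; exact (proj1 (proj1 (filter_In _ _ _) (HQP q Hq))). }
    simpl; lia.
Qed.

Lemma NoDup_length_le_2 {A : Type} (Q : list A) : NoDup Q ->
  (forall q1 q2 q3, In q1 Q -> In q2 Q -> In q3 Q ->
     q1 <> q2 -> q1 <> q3 -> q2 <> q3 -> False) ->
  (length Q <= 2)%nat.
Proof.
  intros HQ H3; destruct Q as [|q1 [|q2 [|q3 Q]]]; simpl; try lia.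
  exfalso; inversion HQ as [|? ? N1 HQ']; inversion HQ' as [|? ? N2 _].
  apply (H3 q1 q2 q3); simpl; auto; intros ->; simpl in *; tauto.
Qed.

Definition on_hor_seg (N : network) (p : point) : Prop :=
  exists s, In s N /\ horizontal s /\ on_seg p s.

Lemma l1_triangle (a b c : point) : l1 a c <= l1 a b + l1 b c.
Proof.
  unfold l1.
  pose proof (Rabs_triang (px a - px b) (px b - px c)).
  pose proof (Rabs_triang (py a - py b) (py b - py c)).
  replace (px a - px c) with ((px a - px b) + (px b - px c)) by ring.
  replace (py a - py c) with ((py a - py b) + (py b - py c)) by ring.
  lra.
Qed.

Ltac unfold_l1 :=
  unfold l1, Rabs, Rmin, Rmax, px, py in *; simpl in *;
  repeat match goal with
         | |- context [Rcase_abs ?a] => destruct (Rcase_abs a)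
         | H : context [Rcase_abs ?a] |- _ => destruct (Rcase_abs a)
         | |- context [Rle_dec ?a ?b] => destruct (Rle_dec a b)
         end.

Lemma l1_detour_between (a b c : point) : l1 a c + l1 c b <= l1 a b ->
  Rmin (py a) (py b) <= py c <= Rmax (py a) (py b).
Proof. intros; unfold_l1; lra. Qed.

Lemma last_cons_default {A : Type} (vs : list A) (a b : A) : last (b :: vs) a = last vs b.
Proof.
  revert a b; induction vs as [|c vs IH]; intros a b; [reflexivity|].
  change (last (c :: vs) a = last (c :: vs) b); now rewrite (IH a c), (IH b c).
Qed.

Lemma path_len_ge_l1 (vs : list point) (a : point) : l1 a (last vs a) <= path_len a vs.
Proof.
  revert a; induction vs as [|b vs IH]; intros a; cbn [path_len].
  - simpl; unfold l1; rewrite !Rminus_diag, Rabs_R0; lra.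
  - rewrite last_cons_default; pose proof (IH b); pose proof (l1_triangle a b (last vs b)); lra.
Qed.

(* The finiteness of a network enters here: each segment either carries (x, y) horizontally or
   misses a whole left neighbourhood of it on the line at height y. *)
Lemma seg_hor_or_avoids_left (s : segment) (x y a0 : R) : axis_parallel s -> a0 < x ->
  (horizontal s /\ on_seg (x, y) s) \/
  exists a1, a0 <= a1 < x /\ forall t, a1 < t < x -> ~ on_seg (t, y) s.
Proof.
  destruct s as [[x1 y1] [x2 y2]]; unfold axis_parallel, horizontal, on_seg, px, py; simpl.
  intros Hs Ha.
  destruct (classic (Rmin y1 y2 <= y <= Rmax y1 y2)) as [Hy|Hy].
  2: { right; exists a0; split; [lra|]; intros t _ [_ H]; contradiction. }
  destruct (Rlt_le_dec (Rmax x1 x2) x) as [HM|HM].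
  { right; exists (Rmax a0 (Rmax x1 x2)); split.
    - split; [apply Rmax_l|now apply Rmax_lub_lt].
    - intros t Ht [[_ H] _]; pose proof (Rmax_r a0 (Rmax x1 x2)); lra. }
  destruct (Rle_lt_dec x (Rmin x1 x2)) as [Hm|Hm].
  { right; exists a0; split; [lra|]; intros t Ht [[H _] _]; lra. }
  left.
  assert (Hx12 : x1 <> x2) by (intros E; subst x2; unfold Rmin, Rmax in *; destruct (Rle_dec x1 x1); lra).
  destruct Hs as [|<-]; [contradiction|].
  repeat split; auto; lra.
Qed.

Lemma hor_seg_of_left_cover (N : network) (x y a0 : R) : rectilinear N -> a0 < x ->
  (forall t, a0 < t < x -> in_net N (t, y)) -> on_hor_seg N (x, y).
Proof.
  revert a0; induction N as [|s N IH]; intros a0 HR Ha Hcov.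
  { destruct (Hcov ((a0 + x) / 2)) as [s [[] _]]; lra. }
  destruct (seg_hor_or_avoids_left s x y a0 (HR s (or_introl eq_refl)) Ha)
    as [Hs|[a1 [Ha1 Hav]]].
  { exists s; split; [left|]; tauto. }
  destruct (IH a1) as [s' [Hs' Hh]]; [intros s' Hs'; apply HR; now right|lra| |].
  - intros t Ht; destruct (Hcov t ltac:(lra)) as [s' [[<-|Hs'] Hon]].
    + exfalso; exact (Hav t Ht Hon).
    + now exists s'.
  - exists s'; split; [right|]; auto.
Qed.

Lemma path_crosses_hor_seg (N : network) (x : R) (vs : list point) (a : point) :
  rectilinear N -> path_in N a vs -> px a < x -> x <= px (last vs a) ->
  exists y, on_hor_seg N (x, y) /\ l1 a (x, y) + l1 (x, y) (last vs a) <= path_len a vs.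
Proof.
  revert a; induction vs as [|b vs IH]; intros a HR Hp Ha Hlast; [simpl in Hlast; lra|].
  destruct Hp as [Hab [Hon Hp]]; rewrite last_cons_default in *; cbn [path_len].
  destruct (Rle_dec x (px b)) as [Hxb|Hxb].
  - assert (Hy : py a = py b) by (destruct Hab as [E|E]; [simpl in E; lra|exact E]).
    exists (py a); split.
    + apply (hor_seg_of_left_cover N x (py a) (px a) HR Ha); intros t Ht; apply Hon.
      unfold on_seg; simpl; rewrite <- Hy, Rmin_left, Rmax_right, Rmin_left, Rmax_left; lra.
    + pose proof (path_len_ge_l1 vs b); pose proof (l1_triangle (x, py a) b (last vs b)).
      assert (l1 a (x, py a) + l1 (x, py a) b = l1 a b) by (unfold_l1; lra).
      lra.
  - destruct (IH b HR Hp ltac:(lra) Hlast) as [y [Hy Hlen]].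
    exists y; split; [exact Hy|]; pose proof (l1_triangle a b (x, y)); lra.
Qed.

Lemma M_path_crosses_hor_seg (N : network) (l r : point) (x : R) :
  rectilinear N -> M_path N l r -> px l < x <= px r ->
  exists y, on_hor_seg N (x, y) /\ Rmin (py l) (py r) <= y <= Rmax (py l) (py r).
Proof.
  intros HR [vs [Hp [Hlast Hlen]]] Hx.
  destruct (path_crosses_hor_seg N x vs l HR Hp) as [y [Hy Hdet]]; [lra|rewrite Hlast; lra|].
  exists y; split; [exact Hy|].
  apply (l1_detour_between l r (x, y)); rewrite Hlast, Hlen in Hdet; exact Hdet.
Qed.

Lemma on_hor_seg_iff (s : segment) (x y : R) : horizontal s ->
  on_seg (x, y) s <->
  Rmin (px (fst s)) (px (snd s)) <= x <= Rmax (px (fst s)) (px (snd s)) /\ y = py (fst s).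
Proof.
  intros [Hy _]; unfold on_seg; simpl; rewrite <- Hy.
  rewrite (Rmin_left (py (fst s))), (Rmax_left (py (fst s))) by lra.
  split; intros [Hx H]; split; auto; lra.
Qed.

Lemma hor_heights_finite (N : network) (x : R) :
  exists L, NoDup L /\ forall y, In y L <-> on_hor_seg N (x, y).
Proof.
  set (crosses := fun s : segment =>
         horizontal s /\ Rmin (px (fst s)) (px (snd s)) <= x <= Rmax (px (fst s)) (px (snd s))).
  set (f := fun s => if excluded_middle_informative (crosses s) then true else false).
  exists (nodup Req_EM_T (map (fun s => py (fst s)) (filter f N))).
  split; [apply NoDup_nodup|]; intros y.
  rewrite nodup_In, in_map_iff; split.
  - intros [s [<- Hs]]; apply filter_In in Hs as [Hs Hf]; unfold f in Hf.
    destruct (excluded_middle_informative (crosses s)) as [[Hh Hx]|]; [|discriminate].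
    exists s; split; [exact Hs|split; [exact Hh|]]; now apply on_hor_seg_iff.
  - intros [s [Hs [Hh Hon]]]; apply (on_hor_seg_iff s x y Hh) in Hon as [Hx ->].
    exists s; split; [reflexivity|]; apply filter_In; split; [exact Hs|unfold f].
    now destruct (excluded_middle_informative (crosses s)) as [|Hn]; [|exfalso; apply Hn].
Qed.

Lemma finite_min_such_that (Q : R -> Prop) (l : list R) : (exists e, In e l /\ Q e) ->
  exists m, In m l /\ Q m /\ forall e, In e l -> Q e -> m <= e.
Proof.
  induction l as [|a l IH]; intros [e [He HQe]]; [destruct He|].
  destruct (classic (exists e, In e l /\ Q e)) as [Hl|Hl].
  - destruct (IH Hl) as [m [Hm [HQm Hmin]]].
    destruct (classic (Q a /\ a < m)) as [[HQa Ham]|Ham].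
    + exists a; split; [now left|split; [exact HQa|]].
      intros e' [<-|He'] HQe'; [lra|specialize (Hmin e' He' HQe'); lra].
    + exists m; split; [now right|split; [exact HQm|]].
      intros e' [<-|He'] HQe'; [|now apply Hmin].
      destruct (Rle_lt_dec m a); [assumption|exfalso; tauto].
  - destruct He as [->|He]; [|exfalso; eauto].
    exists e; split; [now left|split; [exact HQe|]].
    intros e' [<-|He'] HQe'; [lra|exfalso; eauto].
Qed.

Lemma finite_max_such_that (Q : R -> Prop) (l : list R) : (exists e, In e l /\ Q e) ->
  exists m, In m l /\ Q m /\ forall e, In e l -> Q e -> e <= m.
Proof.
  intros [e [He HQe]].
  destruct (finite_min_such_that (fun e => Q (- e)) (map Ropp l)) as [m [Hm [HQm Hmin]]].
  { exists (- e); rewrite Ropp_involutive; split; [now apply in_map|exact HQe]. }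
  apply in_map_iff in Hm as [m' [<- Hm']].
  exists m'; rewrite Ropp_involutive in HQm; split; [exact Hm'|split; [exact HQm|]].
  intros e' He' HQe'.
  enough (- m' <= - e') by lra.
  apply Hmin; [now apply in_map|now rewrite Ropp_involutive].
Qed.

Lemma sweep_run_state (Rp : pairs) (P : R -> list R) (x : R) : sweep_run Rp P -> 0 <= x ->
  P x = [] \/ minimal_piercing Rp x (P x).
Proof.
  intros [H0 [Hstep Hend]] Hx.
  set (l := 0 :: map (fun pr => px (snd pr)) Rp).
  assert (Hsp : forall e, sweep_point Rp e <-> In e l).
  { intros e; unfold sweep_point, event, l; simpl; rewrite in_map_iff.
    split; intros [E|[pr [E1 E2]]]; auto; right; eauto. }
  destruct (Req_dec x 0) as [->|Hx0]; [now right|].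
  destruct (classic (exists e, event Rp e /\ x <= e)) as [[e [He Hxe]]|Hnoev].
  - right.
    destruct (finite_min_such_that (fun e => x <= e) l) as [x2 [Hx2 [Hxx2 Hmin]]].
    { exists e; split; [apply Hsp; now right|exact Hxe]. }
    destruct (finite_max_such_that (fun e => e < x) l) as [x1 [Hx1 [Hx1x Hmax]]].
    { exists 0; split; [now left|lra]. }
    apply (Hstep x1 x2); try (apply Hsp; assumption); try lra.
    intros e' He' Hbetween; apply Hsp in He'.
    destruct (Rlt_le_dec e' x) as [Hlt|Hge];
      [specialize (Hmax e' He' Hlt)|specialize (Hmin e' He' Hge)]; lra.
  - left; apply Hend; [exact Hx|].
    intros e He; destruct (Rlt_le_dec e x) as [|Hxe]; [assumption|exfalso; eauto].
Qed.

Lemma minimal_piercing_private (Rp : pairs) (x : R) (Px : list R) (p : R) :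
  minimal_piercing Rp x Px -> In p Px ->
  exists pr, In pr Rp /\ in_Ix pr x /\ ylo pr <= p <= yhi pr /\
    forall q, In q Px -> ylo pr <= q <= yhi pr -> q = p.
Proof.
  intros [_ [Hpierce Hmin]] Hp.
  assert (Hnot : ~ pierces Rp x (remove Req_EM_T p Px)).
  { apply Hmin.
    - intros q Hq; now apply in_remove in Hq.
    - intros Hincl; now destruct (in_remove _ _ _ _ (Hincl p Hp)). }
  apply not_all_ex_not in Hnot as [pr Hpr].
  apply imply_to_and in Hpr as [Hin Hpr]; apply imply_to_and in Hpr as [HI Hpr].
  assert (Honly : forall q, In q Px -> ylo pr <= q <= yhi pr -> q = p).
  { intros q Hq Hqb; apply NNPP; intros Hne.
    apply Hpr; exists q; split; [now apply in_in_remove|exact Hqb]. }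
  exists pr; split; [exact Hin|split; [exact HI|split; [|exact Honly]]].
  destruct (Hpierce pr Hin HI) as [y [Hy Hyb]].
  now rewrite <- (Honly y Hy Hyb).
Qed.

Definition private_witness (Px : list R) (p h : R) : Prop :=
  exists a b, a <= p <= b /\ a <= h <= b /\ forall q, In q Px -> a <= q <= b -> q = p.

Lemma private_witness_no_three (Px : list R) (h q1 q2 q3 : R) :
  In q1 Px -> In q2 Px -> In q3 Px -> q1 <> q2 -> q1 <> q3 -> q2 <> q3 ->
  private_witness Px q1 h -> private_witness Px q2 h -> private_witness Px q3 h -> False.
Proof.
  intros I1 I2 I3 D12 D13 D23
    [a1 [b1 [A1 [B1 C1]]]] [a2 [b2 [A2 [B2 C2]]]] [a3 [b3 [A3 [B3 C3]]]].
  assert (outside : forall qi qj a b, In qj Px ->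
            (forall q, In q Px -> a <= q <= b -> q = qi) -> qj <> qi -> qj < a \/ b < qj).
  { intros qi qj a b Hj Hab Hne.
    destruct (Rlt_le_dec qj a); [now left|].
    destruct (Rlt_le_dec b qj); [now right|].
    exfalso; apply Hne, Hab; auto; lra. }
  pose proof (outside q1 q2 a1 b1 I2 C1 (not_eq_sym D12)).
  pose proof (outside q1 q3 a1 b1 I3 C1 (not_eq_sym D13)).
  pose proof (outside q2 q1 a2 b2 I1 C2 D12).
  pose proof (outside q2 q3 a2 b2 I3 C2 (not_eq_sym D23)).
  pose proof (outside q3 q1 a3 b3 I1 C3 D13).
  pose proof (outside q3 q2 a3 b3 I2 C3 D23).
  repeat match goal with H : _ \/ _ |- _ => destruct H end; lra.
Qed.

Lemma minimal_piercing_hor_witness (Rp : pairs) (N : network) (x : R) (Px : list R) (p : R) :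
  crossing Rp -> feasible Rp N -> 0 <= x -> minimal_piercing Rp x Px -> In p Px ->
  exists h, on_hor_seg N (x, h) /\ private_witness Px p h.
Proof.
  intros Hc [HR HM] Hx Hmin Hp.
  destruct (minimal_piercing_private Rp x Px p Hmin Hp) as [pr [Hin [[_ HI] [Hpb Honly]]]].
  destruct (Hc pr Hin) as [Hl _].
  destruct (M_path_crosses_hor_seg N (fst pr) (snd pr) x HR (HM pr Hin)) as [h [Hh Hhb]];
    [lra|].
  exists h; split; [exact Hh|]; exists (ylo pr), (yhi pr); auto.
Qed.

Theorem mainTheorem11 (Rp : pairs) (Nopt : network) (P : R -> list R) :
  crossing Rp -> optimal Rp Nopt -> sweep_run Rp P ->
  forall x : R, 0 <= x ->
    exists L : list R,
      NoDup L /\ (forall y, In y L <-> right_hor_point Nopt (x, y)) /\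
      (length (P x) <= 2 * length L)%nat.
Proof.
  intros Hc [Hfeas _] Hrun x Hx.
  destruct (hor_heights_finite Nopt x) as [L [HL HinL]].
  exists L; split; [exact HL|split].
  { intros y; rewrite HinL; unfold right_hor_point; simpl; tauto. }
  destruct (sweep_run_state Rp P x Hrun Hx) as [-> | Hmin]; [simpl; lia|].
  apply (length_le_mul_witnesses (private_witness (P x)) 2 L (P x) (proj1 Hmin)).
  - intros p Hp.
    destruct (minimal_piercing_hor_witness Rp Nopt x (P x) p Hc Hfeas Hx Hmin Hp)
      as [h [Hh Hw]].
    exists h; split; [now apply HinL|exact Hw].
  - intros h Q HQ HQP HW; apply NoDup_length_le_2; [exact HQ|].
    intros q1 q2 q3 I1 I2 I3 D12 D13 D23.
    apply (private_witness_no_three (P x) h q1 q2 q3); auto.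
Qed.
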